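(* Let $X$ be a topological space, $I$ a set, and $(\phi_i)_{i\in I}$, $(\psi_i)_{i\in I}$ uniformly bounded families of lower semicontinuous functions $X\to\mathbb{R}$. For $f\in X$ and $m\in\mathbb{N}$, $m\ge1$, define $\phi(f)=\sup_{i\in I}\phi_i(f)$, $\theta_m(f)=\sup_{i\in I}\big[\phi_i(f)+2^{-m}\psi_i(f)\big]$ and $\theta(f)=\sum_{m=1}^\infty2^{-m}\theta_m(f)$. If $(f_n)$ is a sequence converging to $f$ in $X$ with $\theta(f_n)\to\theta(f)$, then there is a sequence $(i_n)$ in $I$ such that $\phi_{i_n}(f)\to\phi(f)$, $\phi_{i_n}(f_n)\to\phi(f)$, $\phi(f_n)\to\phi(f)$, and $\psi_{i_n}(f_n)-\psi_{i_n}(f)\to0$ as $n\to\infty$. Moreover, if $I$ is equipped with a topology in which it is sequentially compact, then $(i_n)$ may be chosen to be convergent in that topology. *)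

From HB Require Import structures.
From mathcomp Require Import all_boot all_order all_algebra.
From mathcomp Require Import all_classical all_reals all_analysis.
Set Implicit Arguments. Unset Strict Implicit. Unset Printing Implicit Defensive.
Import Order.TTheory GRing.Theory Num.Theory.
Import numFieldNormedType.Exports.
Local Open Scope classical_set_scope.
Local Open Scope ring_scope.

Definition supfam (R : realType) (X I : Type) (phi : I -> X -> R) (x : X) : R :=
  sup (range (fun i => phi i x)).

Definition theta_m (R : realType) (X I : Type) (phi psi : I -> X -> R)
  (m : nat) (x : X) : R :=
  sup (range (fun i => phi i x + (2 ^- m) * psi i x)).

Definition theta (R : realType) (X I : Type) (phi psi : I -> X -> R) (x : X) : R :=
  limn (fun N => \sum_(1 <= m < N) (2 ^- m) * theta_m phi psi m x).

Definition seq_compact (T : topologicalType) : Prop :=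
  forall u : nat -> T, exists s : nat -> nat,
    (forall n, (s n < s n.+1)%N) /\ exists l : T, (u \o s) @ \oo --> l.

From HB Require Import structures.
From mathcomp Require Import all_boot all_order all_algebra.
From mathcomp Require Import all_classical all_reals all_analysis.
From mathcomp Require Import ring lra.
Set Implicit Arguments. Unset Strict Implicit. Unset Printing Implicit Defensive.
Import Order.TTheory GRing.Theory Num.Theory.
Import numFieldNormedType.Exports.
Local Open Scope classical_set_scope.
Local Open Scope ring_scope.

(* Each theta_m is a supremum of lower semicontinuous functions, so along
   f_n -> f no theta_m can drop below theta_m(f) in the limit.  The weights 2^-m
   are summable and theta(f_n) -> theta(f), so no theta_m can exceed theta_m(f)
   in the limit either: theta_m(f_n) -> theta_m(f) for every m.  Since
   |theta_m - phi| <= 2^-m M, this gives phi(f_n) -> phi(f).  If i_k maximizes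
   theta_(L_k)(f) up to 4^-(L_k), lower semicontinuity of phi_(i_k) and psi_(i_k)
   together with theta_(L_k)(f_n) -> theta_(L_k)(f) make phi_(i_k)(f),
   phi_(i_k)(f_n) and, after dividing by 2^-(L_k), psi_(i_k)(f_n) - psi_(i_k)(f)
   close to their targets for all n beyond a threshold depending on k; a diagonal
   choice k = k(n) -> oo gives the sequence.  Under sequential compactness one
   first extracts a convergent subsequence of the near maximizers. *)

Section SupRange.
Variables (R : realType) (I : Type).

Lemma sup_range_ge (g : I -> R) (B : R) i :
  (forall j, g j <= B) -> g i <= sup (range g).
Proof.
move=> gB; apply: sup_upper_bound; last by exists i.
by split; [exists (g i), i | exists B => _ [j _ <-]].
Qed.

Lemma sup_range_le (g : I -> R) (B : R) :
  inhabited I -> (forall j, g j <= B) -> sup (range g) <= B.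
Proof. by move=> [i] gB; apply: ge_sup => [|_ [j _ <-]]; [exists (g i), i|]. Qed.

Lemma sup_range_adherent (g : I -> R) (B : R) e :
  inhabited I -> (forall j, g j <= B) -> 0 < e -> exists i, sup (range g) - e < g i.
Proof.
move=> [i] gB e_gt0.
have g_sup : has_sup (range g) by split; [exists (g i), i | exists B => _ [j _ <-]].
by have [_ [j _ <-]] := sup_adherent e_gt0 g_sup; exists j.
Qed.

Lemma sup_range_near_ge (g : I -> nat -> R) (gl : I -> R) (B : R) :
  inhabited I -> (forall i n, g i n <= B) -> (forall i, gl i <= B) ->
  (forall i e, 0 < e -> \forall n \near \oo, gl i - e <= g i n) ->
  forall e, 0 < e -> \forall n \near \oo, sup (range gl) - e <= sup (range (g^~ n)).
Proof.
move=> I0 gB glB g_near e e_gt0.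
have e2_gt0 : 0 < e / 2 by lra.
have [i gli] := sup_range_adherent I0 glB e2_gt0.
apply: filterS (g_near i _ e2_gt0) => n gin.
have := @sup_range_ge (g^~ n) B i (gB^~ n); lra.
Qed.

End SupRange.

Section HalfPowers.
Variable R : realType.

Lemma half_pow_gt0 m : 0 < (2:R)^-m.
Proof. by rewrite invr_gt0 exprn_gt0. Qed.

Lemma half_pow_le1 m : (2:R)^-m <= 1.
Proof. by rewrite invf_le1 ?exprn_gt0 // exprn_ege1 // ler1n. Qed.

Lemma cvg_scaled_half_pow (C : R) : (fun N => C * (2:R)^-N) @ \oo --> 0.
Proof.
have half_lt1 : `|(2:R)^-1| < 1 by rewrite ger0_norm ?invr_ge0 // invf_lt1 // ltr1n.
rewrite -(mulr0 C); apply: cvgMl_tmp.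
by under eq_fun do rewrite -exprVn; exact: cvg_expr.
Qed.

Lemma scaled_half_pow_near_lt (C e : R) :
  0 < e -> \forall N \near \oo, C * (2:R)^-N < e.
Proof.
move=> e_gt0; move: (cvg_scaled_half_pow C) => /cvgr_dist_lt /(_ e e_gt0).
by apply: filterS => N; rewrite sub0r normrN; exact: le_lt_trans (ler_norm _).
Qed.

Lemma sum_half_pow a b : (a <= b)%N ->
  \sum_(a <= m < b) (2:R)^-m = 2 * 2^-a - 2 * 2^-b.
Proof.
elim: b => [|b IH]; first by rewrite leqn0 => /eqP ->; rewrite big_geq // subrr.
rewrite leq_eqVlt => /orP[/eqP ->|ab]; first by rewrite big_geq // subrr.
rewrite big_nat_recr //= IH // exprS invfM.
have two_neq0 : (2:R) != 0 by rewrite pnatr_eq0.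
by field; rewrite !expf_neq0.
Qed.

Lemma sum_half_pow_le a b : \sum_(a <= m < b) (2:R)^-m <= 2 * 2^-a.
Proof.
have [ab|/ltnW ba] := leqP a b; last first.
  by rewrite big_geq // mulr_ge0 // ltW // half_pow_gt0.
by rewrite sum_half_pow // lerBlDr lerDl mulr_ge0 // ltW // half_pow_gt0.
Qed.

End HalfPowers.

Lemma cvg_of_near_le_half_pow (R : realType) (u : nat -> R) (l C : R) (p : nat -> nat) :
  p @ \oo --> \oo -> (\forall n \near \oo, `|l - u n| <= C * 2^-(p n)) ->
  u @ \oo --> l.
Proof.
move=> p_cvg u_near; apply/cvgrPdist_le => e e_gt0.
have := cvg_comp _ _ p_cvg (cvg_scaled_half_pow C) => /cvgr_dist_lt /(_ e e_gt0).
apply: filterS2 u_near => n ul; rewrite sub0r normrN => /(le_lt_trans (ler_norm _)).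
by move=> /ltW; exact: le_trans ul.
Qed.

Definition dyadic_sum (R : realType) (c : nat -> R) (N : nat) : R :=
  \sum_(1 <= m < N) 2^-m * c m.

Section DyadicSum.
Variable R : realType.

Lemma dyadic_sumB (c d : nat -> R) N :
  dyadic_sum (fun m => c m - d m) N = dyadic_sum c N - dyadic_sum d N.
Proof. by rewrite /dyadic_sum -sumrB; apply: eq_bigr => m _; rewrite mulrBr. Qed.

Lemma dyadic_sum_ge_term (c : nat -> R) m N :
  (forall k, (k < N)%N -> 0 <= c k) -> (0 < m < N)%N -> 2^-m * c m <= dyadic_sum c N.
Proof.
move=> c_ge0 mN; rewrite /dyadic_sum (bigD1_seq m) ?mem_index_iota ?iota_uniq //=.
rewrite lerDl big_seq_cond; apply: sumr_ge0 => k /andP[].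
by rewrite mem_index_iota => /andP[_ kN] _; rewrite mulr_ge0 ?c_ge0 // ltW // half_pow_gt0.
Qed.

Lemma dyadic_sum_const_le (d : R) N : 0 <= d -> dyadic_sum (fun=> d) N <= d.
Proof.
move=> d_ge0; rewrite /dyadic_sum -mulr_suml ler_piMl //.
by apply: le_trans (sum_half_pow_le _ _ _) _; rewrite expr1 divff.
Qed.

Variables (c : nat -> R) (B : R).
Hypothesis c_bounded : forall m, `|c m| <= B.

Lemma dyadic_sum_tail N N' :
  (0 < N <= N')%N -> `|dyadic_sum c N' - dyadic_sum c N| <= 2 * B * 2^-N.
Proof.
move=> /andP[N_gt0 NN']; rewrite /dyadic_sum (big_cat_nat N_gt0 NN') /= addrAC subrr add0r.
have B_ge0 : 0 <= B := le_trans (normr_ge0 _) (c_bounded 0).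
apply: le_trans (ler_norm_sum _ _ _) _.
apply: (@le_trans _ _ (\sum_(N <= m < N') 2^-m * B)).
  apply: ler_sum => m _; rewrite normrM (ger0_norm (ltW (half_pow_gt0 _ m))).
  by apply: ler_wpM2l; [exact/ltW/half_pow_gt0 | exact: c_bounded].
by rewrite -mulr_suml mulrAC; exact: (ler_wpM2r B_ge0 (sum_half_pow_le _ _ _)).
Qed.

Lemma dyadic_sum_cvg : cvgn (dyadic_sum c).
Proof.
apply/cauchy_cvgP/cauchy_exP => e e_gt0.
near \oo => N; exists (dyadic_sum c N).
apply: filterS (nbhs_infty_ge N) => n Nn; rewrite /ball /= distrC.
apply: le_lt_trans (dyadic_sum_tail _) _.
  by rewrite Nn andbT; near: N; exact: nbhs_infty_gt.
by near: N; exact: scaled_half_pow_near_lt.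
Unshelve. all: by end_near.
Qed.

Lemma dyadic_sum_lim_tail N :
  (0 < N)%N -> `|limn (dyadic_sum c) - dyadic_sum c N| <= 2 * B * 2^-N.
Proof.
move=> N_gt0.
have tail : \forall n \near \oo, `|dyadic_sum c n - dyadic_sum c N| <= 2 * B * 2^-N.
  by near=> n; apply: dyadic_sum_tail; rewrite N_gt0; near: n; exact: nbhs_infty_ge.
have lim_ge : dyadic_sum c N - 2 * B * 2^-N <= limn (dyadic_sum c).
  by apply: limr_ge; [exact: dyadic_sum_cvg | apply: filterS tail => n; rewrite ler_norml; lra].
have lim_le : limn (dyadic_sum c) <= dyadic_sum c N + 2 * B * 2^-N.
  by apply: limr_le; [exact: dyadic_sum_cvg | apply: filterS tail => n; rewrite ler_norml; lra].
by rewrite ler_norml; apply/andP; split; lra.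
Unshelve. all: by end_near.
Qed.

End DyadicSum.

Lemma dyadic_sum_term_near_le (R : realType) (a : nat -> nat -> R) (B : R) :
  (forall n k, `|a n k| <= B) ->
  (forall k e, 0 < e -> \forall n \near \oo, - e <= a n k) ->
  (fun n => limn (dyadic_sum (a n))) @ \oo --> 0 ->
  forall m e, (0 < m)%N -> 0 < e -> \forall n \near \oo, a n m <= e.
Proof.
move=> a_bounded a_near_ge a_cvg m e m_gt0 e_gt0.
set t := (2:R)^-m; have t_gt0 : 0 < t := half_pow_gt0 _ m.
set d := t * e / 4; have d_gt0 : 0 < d by rewrite /d; have := mulr_gt0 t_gt0 e_gt0; lra.
have [N [mN tail_small]] : exists N, (m < N)%N /\ 2 * B * 2^-N < d.
  near \oo => N; exists N; split; near: N; [exact: nbhs_infty_gt | exact: scaled_half_pow_near_lt].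
have N_gt0 : (0 < N)%N := ltn_trans m_gt0 mN.
have head_ge : \forall n \near \oo, forall k : 'I_N, - d <= a n k.
  by apply: filter_forall => k; exact: a_near_ge.
have lim_small : \forall n \near \oo, `|limn (dyadic_sum (a n))| <= d.
  by move: a_cvg => /cvgrPdist_le /(_ d d_gt0); apply: filterS => n; rewrite sub0r normrN.
apply: filterS2 head_ge lim_small => n a_ge lim_le.
have tail := dyadic_sum_lim_tail (a_bounded n) N_gt0.
(* Shifted by d, the first N terms are nonnegative. *)
have term_le : t * (a n m + d) <= dyadic_sum (a n) N + d.
  have -> : dyadic_sum (a n) N = dyadic_sum (fun k => a n k + d) N - dyadic_sum (fun=> d) N.
    by rewrite -dyadic_sumB; apply: eq_bigr => k _; rewrite addrK.
  have shifted_ge0 k : (k < N)%N -> 0 <= a n k + d.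
    by move=> kN; have := a_ge (Ordinal kN); lra.
  have mN' : (0 < m < N)%N by rewrite m_gt0.
  have := dyadic_sum_ge_term shifted_ge0 mN'; rewrite -/t.
  by have := dyadic_sum_const_le N (ltW d_gt0); lra.
have : t * a n m <= t * e.
  have td_ge0 : 0 <= t * d by rewrite mulr_ge0 ?ltW.
  have te : t * e = 4 * d by rewrite /d; field.
  move: term_le tail lim_le; rewrite mulrDr !ler_norml.
  by move=> ? /andP[? ?] /andP[? ?]; lra.
by rewrite ler_pM2l.
Unshelve. all: by end_near.
Qed.

Lemma cvgn_infty_of_incr (s : nat -> nat) : (forall n, (s n < s n.+1)%N) -> s @ \oo --> \oo.
Proof.
move=> s_incr A [K _ KA]; apply: filterS (nbhs_infty_ge K) => n Kn; apply: KA.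
have n_le_s : forall k, (k <= s k)%N by elim=> // k IH; exact: leq_ltn_trans IH (s_incr k).
exact: leq_trans Kn (n_le_s n).
Qed.

(* For a sequence of eventual properties, the n-th term of [ka] is the largest
   [k <= n] whose property already holds at [n]. *)
Lemma near_diagonal (P : nat -> nat -> Prop) :
  (forall k, \forall n \near \oo, P k n) ->
  exists ka : nat -> nat, ka @ \oo --> \oo /\ \forall n \near \oo, P (ka n) n.
Proof.
move=> P_near.
have /choice [N PN] : forall k, exists N, forall n, (N <= n)%N -> P k n.
  by move=> k; have [N _ PN] := P_near k; exists N.
pose ka n := \big[maxn/0%N]_(k < n.+1 | (N k <= n)%N) k.
exists ka; split.
  move=> A [K _ KA]; apply: filterS2 (nbhs_infty_ge K) (nbhs_infty_ge (N K)).
  move=> n; rewrite -ltnS => Kn NKn; apply: KA => /=.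
  exact: (@leq_bigmax_cond _ (fun k : 'I_n.+1 => (N k <= n)%N) (fun k => val k) (Ordinal Kn)).
near=> n; apply: PN; apply: (big_ind (fun k => (N k <= n)%N)).
- by near: n; exact: nbhs_infty_ge.
- by move=> x y; rewrite /maxn; case: ifP.
- by [].
Unshelve. all: by end_near.
Qed.

Lemma lsc_near_ge (R : realType) (X : topologicalType) (g : X -> R) (xs : nat -> X) (x : X) :
  lower_semicontinuous (fun y => (g y)%:E) -> xs @ \oo --> x ->
  forall e, 0 < e -> \forall n \near \oo, g x - e <= g (xs n).
Proof.
move=> g_lsc xs_cvg e e_gt0.
have [V xV Vg] := g_lsc x (g x - e) (ltac:(rewrite lte_fin; lra)).
have xs_V : \forall n \near \oo, V (xs n) := xs_cvg V xV.
by apply: filterS xs_V => n /Vg; rewrite lte_fin => /ltW.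
Qed.

Section NearMaximizers.
Variables (R : realType) (X : topologicalType) (I : Type).
Variables (phi psi : I -> X -> R) (M : R).
Hypothesis I_inhabited : inhabited I.
Hypothesis phi_psi_bounded : forall i x, `|phi i x| <= M /\ `|psi i x| <= M.

Lemma phi_le_bound i x : phi i x <= M.
Proof. by have [+ _] := phi_psi_bounded i x; rewrite ler_norml => /andP[]. Qed.

Lemma scaled_psi_norm_le m i x : `|2^-m * psi i x| <= 2^-m * M.
Proof.
rewrite normrM (ger0_norm (ltW (half_pow_gt0 _ m))).
by apply: ler_wpM2l; [exact/ltW/half_pow_gt0 | have [] := phi_psi_bounded i x].
Qed.

Lemma penalized_norm_le m i x : `|phi i x + 2^-m * psi i x| <= 2 * M.
Proof.
have [phi_le _] := phi_psi_bounded i x.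
have tM_le : 2^-m * M <= M.
  by rewrite ler_piMl ?half_pow_le1 // (le_trans (normr_ge0 _) phi_le).
by apply: le_trans (ler_normD _ _) _; have := scaled_psi_norm_le m i x; lra.
Qed.

Lemma penalized_le_theta_m m i x : phi i x + 2^-m * psi i x <= theta_m phi psi m x.
Proof.
apply: (@sup_range_ge _ _ (fun j => phi j x + 2^-m * psi j x) (2 * M)) => j.
by have := penalized_norm_le m j x; rewrite ler_norml => /andP[].
Qed.

Lemma phi_le_supfam i x : phi i x <= supfam phi x.
Proof. exact: (@sup_range_ge _ _ (phi^~ x) M i (phi_le_bound^~ x)). Qed.

Lemma theta_m_norm_le m x : `|theta_m phi psi m x| <= 2 * M.
Proof.
have [i] := I_inhabited; rewrite ler_norml; apply/andP; split.
  have := penalized_le_theta_m m i x; have := penalized_norm_le m i x; rewrite ler_norml.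
  by move=> /andP[? _]; lra.
by apply: sup_range_le => // j; have := penalized_norm_le m j x; rewrite ler_norml => /andP[].
Qed.

Lemma theta_m_le_supfam m x : theta_m phi psi m x <= supfam phi x + 2^-m * M.
Proof.
apply: sup_range_le => // i; have := phi_le_supfam i x.
by have := scaled_psi_norm_le m i x; rewrite ler_norml => /andP[_ ?]; lra.
Qed.

Lemma supfam_le_theta_m m x : supfam phi x <= theta_m phi psi m x + 2^-m * M.
Proof.
apply: sup_range_le => // i; have := penalized_le_theta_m m i x.
by have := scaled_psi_norm_le m i x; rewrite ler_norml => /andP[? _]; lra.
Qed.

Lemma near_maximizer_estimates L i x y :
  theta_m phi psi L x - 2^-L * 2^-L < phi i x + 2^-L * psi i x ->
  phi i x - 2^-L * 2^-L <= phi i y -> psi i x - 2^-L * 2^-L <= psi i y ->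
  theta_m phi psi L y <= theta_m phi psi L x + 2^-L * 2^-L ->
  [/\ `|supfam phi x - phi i x| <= (2 * M + 3) * 2^-L,
      `|supfam phi x - phi i y| <= (2 * M + 3) * 2^-L &
      `|psi i y - psi i x| <= (2 * M + 3) * 2^-L].
Proof.
set t := (2:R)^-L => i_near_max phi_y psi_y theta_y.
have t_gt0 : 0 < t := half_pow_gt0 _ L.
have tt_le : t * t <= t := ler_piMl (ltW t_gt0) (half_pow_le1 _ L).
have tM_ge0 : 0 <= t * M.
  exact: mulr_ge0 (ltW t_gt0) (le_trans (normr_ge0 _) (proj1 (phi_psi_bounded i x))).
have := scaled_psi_norm_le L i x; have := scaled_psi_norm_le L i y.
rewrite -/t !ler_norml => /andP[psi_y_ge psi_y_le] /andP[psi_x_ge psi_x_le].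
have := phi_le_supfam i x; have := penalized_le_theta_m L i y.
have := supfam_le_theta_m L x; have := theta_m_le_supfam L x; rewrite -/t.
move=> theta_x_le sup_x_le pen_y_le phi_x_le.
have psi_diff_le : psi i y - psi i x <= 3 * t.
  have : t * (psi i y - psi i x) <= t * (3 * t) by rewrite mulrBr; lra.
  by rewrite ler_pM2l.
rewrite mulrDl -mulrA [M * t]mulrC.
by split; apply/andP; split; lra.
Qed.

Variables (fs : nat -> X) (f : X).
Hypothesis fs_cvg : fs @ \oo --> f.
Hypothesis phi_lsc : forall i, lower_semicontinuous (fun x => (phi i x)%:E).
Hypothesis psi_lsc : forall i, lower_semicontinuous (fun x => (psi i x)%:E).

Lemma theta_m_near_ge m e :
  0 < e -> \forall n \near \oo, theta_m phi psi m f - e <= theta_m phi psi m (fs n).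
Proof.
have pen_le k j z : phi j z + 2^-k * psi j z <= 2 * M.
  by have := penalized_norm_le k j z; rewrite ler_norml => /andP[].
apply: (@sup_range_near_ge _ _ (fun i n => phi i (fs n) + 2^-m * psi i (fs n))
  (fun i => phi i f + 2^-m * psi i f) (2 * M)) => // i e' e'_gt0.
have e'2_gt0 : 0 < e' / 2 by lra.
apply: filterS2 (lsc_near_ge (@phi_lsc i) fs_cvg e'2_gt0)
  (lsc_near_ge (@psi_lsc i) fs_cvg e'2_gt0) => n phi_n psi_n.
have t_gt0 := half_pow_gt0 R m; have t_le1 := half_pow_le1 R m.
have := ler_wpM2l (ltW t_gt0) psi_n; have := ler_piMl (ltW e'2_gt0) t_le1.
by rewrite mulrBr; lra.
Qed.

Lemma supfam_near_ge e :
  0 < e -> \forall n \near \oo, supfam phi f - e <= supfam phi (fs n).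
Proof.
apply: (@sup_range_near_ge _ _ (fun i n => phi i (fs n)) (phi^~ f) M) => // i.
- by move=> n; exact: phi_le_bound.
- exact: phi_le_bound.
- by move=> e' e'_gt0; exact: lsc_near_ge.
Qed.

Hypothesis theta_cvg : (fun n => theta phi psi (fs n)) @ \oo --> theta phi psi f.

Lemma theta_m_near_le m e : (0 < m)%N -> 0 < e ->
  \forall n \near \oo, theta_m phi psi m (fs n) <= theta_m phi psi m f + e.
Proof.
move=> m_gt0 e_gt0.
pose a n k := theta_m phi psi k (fs n) - theta_m phi psi k f.
have a_bounded n k : `|a n k| <= 4 * M.
  apply: le_trans (ler_normB _ _) _.
  by have := theta_m_norm_le k (fs n); have := theta_m_norm_le k f; lra.
have a_near_ge k e' : 0 < e' -> \forall n \near \oo, - e' <= a n k.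
  by move=> e'_gt0; have := theta_m_near_ge k e'_gt0; apply: filterS => n; rewrite /a; lra.
have a_cvg : (fun n => limn (dyadic_sum (a n))) @ \oo --> 0.
  have cvg_at z : cvgn (dyadic_sum (fun k => theta_m phi psi k z)).
    exact: (dyadic_sum_cvg (theta_m_norm_le^~ z)).
  suff -> : (fun n => limn (dyadic_sum (a n))) =
            (fun n => theta phi psi (fs n) - theta phi psi f) by apply/subr_cvg0.
  apply/funext => n; rewrite [dyadic_sum _](_ : _ = dyadic_sum (fun k => theta_m phi psi k (fs n))
    - dyadic_sum (fun k => theta_m phi psi k f)); first by rewrite limB.
  by apply/funext => N; rewrite /a dyadic_sumB.
have := dyadic_sum_term_near_le a_bounded a_near_ge a_cvg m_gt0 e_gt0.
by apply: filterS => n; rewrite /a; lra.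
Qed.

Lemma supfam_cvg : (fun n => supfam phi (fs n)) @ \oo --> supfam phi f.
Proof.
apply/cvgrPdist_le => e e_gt0; have e2_gt0 : 0 < e / 2 by lra.
have [m [m_gt0 mM]] : exists m, (0 < m)%N /\ 2 * M * 2^-m < e / 2.
  near \oo => m; exists m; split; near: m; [exact: nbhs_infty_gt | exact: scaled_half_pow_near_lt].
have := theta_m_near_le m_gt0 e2_gt0; have := supfam_near_ge e_gt0.
apply: filterS2 => n sup_ge theta_le.
have := supfam_le_theta_m m (fs n); have := theta_m_le_supfam m f.
by rewrite ler_norml; lra.
Unshelve. all: by end_near.
Qed.

Lemma cvg_near_maximizers (j : nat -> I) (L : nat -> nat) :
  L @ \oo --> \oo -> (forall k, (0 < L k)%N) ->
  (forall k, theta_m phi psi (L k) f - 2^-(L k) * 2^-(L k) <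
             phi (j k) f + 2^-(L k) * psi (j k) f) ->
  exists ka : nat -> nat, ka @ \oo --> \oo /\
    [/\ (fun n => phi (j (ka n)) f) @ \oo --> supfam phi f,
        (fun n => phi (j (ka n)) (fs n)) @ \oo --> supfam phi f &
        (fun n => psi (j (ka n)) (fs n) - psi (j (ka n)) f) @ \oo --> 0].
Proof.
move=> L_cvg L_gt0 j_near_max.
pose tol k : R := 2^-(L k) * 2^-(L k).
have near_all k : \forall n \near \oo,
    [/\ phi (j k) f - tol k <= phi (j k) (fs n), psi (j k) f - tol k <= psi (j k) (fs n)
       & theta_m phi psi (L k) (fs n) <= theta_m phi psi (L k) f + tol k].
  have tol_gt0 : 0 < tol k by rewrite mulr_gt0 ?half_pow_gt0.
  near=> n; split; near: n; [exact: lsc_near_ge | exact: lsc_near_ge | exact: theta_m_near_le].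
have [ka [ka_cvg near_ka]] := near_diagonal near_all.
have estimates : \forall n \near \oo, [/\
    `|supfam phi f - phi (j (ka n)) f| <= (2 * M + 3) * 2^-(L (ka n)),
    `|supfam phi f - phi (j (ka n)) (fs n)| <= (2 * M + 3) * 2^-(L (ka n)) &
    `|psi (j (ka n)) (fs n) - psi (j (ka n)) f| <= (2 * M + 3) * 2^-(L (ka n))].
  by apply: filterS near_ka => n [phi_n psi_n theta_n]; exact: near_maximizer_estimates.
have Lka_cvg : (L \o ka) @ \oo --> \oo := cvg_comp _ _ ka_cvg L_cvg.
exists ka; split => //; split; apply: (cvg_of_near_le_half_pow (C := 2 * M + 3) Lka_cvg).
- by apply: filterS estimates => n [? _ _].
- by apply: filterS estimates => n [_ ? _].
- by apply: filterS estimates => n [_ _]; rewrite sub0r normrN.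
Unshelve. all: by end_near.
Qed.

End NearMaximizers.

Theorem proposition1p2 (R : realType) (X : topologicalType) (I : topologicalType)
  (phi psi : I -> X -> R)
  (hI : inhabited I)
  (hbd : exists M : R, forall i x, `|phi i x| <= M /\ `|psi i x| <= M)
  (hphi : forall i, lower_semicontinuous (fun x => (phi i x)%:E))
  (hpsi : forall i, lower_semicontinuous (fun x => (psi i x)%:E))
  (fs : nat -> X) (f : X)
  (hfs : fs @ \oo --> f)
  (hth : (fun n => theta phi psi (fs n)) @ \oo --> theta phi psi f) :
  (exists i_ : nat -> I,
      (fun n => phi (i_ n) f) @ \oo --> supfam phi f /\
      (fun n => phi (i_ n) (fs n)) @ \oo --> supfam phi f /\
      (fun n => supfam phi (fs n)) @ \oo --> supfam phi f /\
      (fun n => psi (i_ n) (fs n) - psi (i_ n) f) @ \oo --> (0 : R)) /\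
  (seq_compact I ->
   exists i_ : nat -> I,
      (fun n => phi (i_ n) f) @ \oo --> supfam phi f /\
      (fun n => phi (i_ n) (fs n)) @ \oo --> supfam phi f /\
      (fun n => supfam phi (fs n)) @ \oo --> supfam phi f /\
      (fun n => psi (i_ n) (fs n) - psi (i_ n) f) @ \oo --> (0 : R) /\
      exists l : I, i_ @ \oo --> l).
Proof.
have [M bounded] := hbd.
have /choice [j j_near_max] : forall k, exists i,
    theta_m phi psi k.+1 f - 2^-k.+1 * 2^-k.+1 < phi i f + 2^-k.+1 * psi i f.
  move=> k; apply: (@sup_range_adherent _ _ (fun i => phi i f + 2^-k.+1 * psi i f) (2 * M)) => //.
  by move=> i; have := penalized_norm_le bounded k.+1 i f; rewrite ler_norml => /andP[].
have near_maximizers := cvg_near_maximizers hI bounded hfs hphi hpsi hth.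
have sup_cvg := supfam_cvg hI bounded hfs hphi hpsi hth.
split.
  have [ka [_ [phi_f phi_fs psi_diff]]] := near_maximizers j succn
    (cvgn_infty_of_incr (fun n => ltnSn n.+1)) (fun k => ltn0Sn k) j_near_max.
  by exists (j \o ka).
move=> /(_ j) [s [s_incr [l js_cvg]]].
have [ka [ka_cvg [phi_f phi_fs psi_diff]]] := near_maximizers (j \o s) (succn \o s)
  (@cvgn_infty_of_incr (succn \o s) s_incr) (fun k => ltn0Sn _) (fun k => j_near_max (s k)).
exists (j \o s \o ka); do 4 split => //.
by exists l; exact: cvg_comp ka_cvg js_cvg.
Qed.
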